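(* Assume the perfect setting and the prior coverage condition $\sup_{z,z'\in\mathcal{Z}}\mathcal{P}_{\mathcal{Z}}(z')/\mathcal{P}_{\mathcal{Z}}(z)\le c_{\mathcal{Z}}$. Let $\delta\in(0,1)$ and let $z\in\mathcal{Z}$ be the ground-truth latent variable. Then for all $(h,t)\in[H]\times[T]$, with probability at least $1-\delta$, $$\sum_{z'\in\mathcal{Z}}\sum_{i\in[t]}D_{\rm H}^2\big(\mathbb{P}^{\pi^i}_z(\breve\tau^i_{h/t}),\mathbb{P}^{\pi^i}_{z'}(\breve\tau^i_{h/t})\big)\cdot\mathbb{P}_{\mathcal{D}}(z'\mid\mathtt{pt}_h^t)\le2\log(c_{\mathcal{Z}}|\mathcal{Z}|/\delta),$$ where $\breve\tau^i_{h/t}=\tau_H$ for $i<t$ and $\breve\tau^t_{h/t}=\tau_h$.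
   Context: High-level model: finite latent set $\mathcal{Z}$; spaces $\mathcal{S},\mathcal{O},\mathcal{G},\Omega$; horizon $H$; for each $z$ transitions $\mathbb{P}_{z,h}(s'\mid s,g)$, emission $\mathbb{O}(o\mid s)$, initial distribution $\rho$. Trajectories $\tau_h=(o_1,g_1,\dots,o_h)$; $\mathbb{P}^\pi_z(\tau_h)$ is the law of $\tau_h$ under latent $z$ and policy $\pi$. Pretraining distribution: with priors $\mathcal{P}_{\mathcal{Z}},\mathcal{P}_\Omega$, behavior policy $\pi^b$ and optimal policies $\pi^*_z$, $\mathbb{P}_{\mathcal{D}}(D)=\mathcal{P}_{\mathcal{Z}}(z)\prod_t\mathcal{P}_\Omega(\omega^t)\prod_h\pi^*_{z,h}(g^{t,*}_h\mid\tau_h^t,\omega^t)\mathbb{O}(o_h^t\mid s_h^t)\pi^b_h(g_h^t\mid\tau_h^t,\omega^t)\mathbb{P}_{z,h}(s^t_{h+1}\mid s_h^t,g_h^t)$; $\mathbb{P}_{\mathcal{D}}(z'\mid\mathtt{pt}_h^t)$ is the posterior of $z'$ under $\mathbb{P}_{\mathcal{D}}$ given the prompt $\mathtt{pt}_h^t=\mathcal{H}_t\cup\{\omega^t,\tau_h^t\}$, with $\mathcal{H}_t=\{\omega^i,\tau_H^i\}_{i<t}$. Perfect setting: the LLM's output is $\mathtt{LLM}(\cdot\mid\mathtt{pt}_h^t)=\mathbb{P}_{\mathcal{D}}(g^{t,*}_h=\cdot\mid\mathtt{pt}_h^t)$ and observations are generated by the true $\mathbb{O}$. The data $\mathcal{H}_t,\tau_h^t$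 are generated in the environment $z$ by the Planner, which in each episode $i$, independently with probability $\epsilon$, uses a fixed exploration policy $\pi_{\mathtt{exp}}$ for the whole episode and otherwise draws $g_h^i\sim\mathtt{LLM}(\cdot\mid\mathtt{pt}_h^i)$; $\pi^i$ denotes the policy used in episode $i$. $D_{\rm H}^2(P,Q)=\tfrac12\mathbb{E}_P[(\sqrt{dQ/dP}-1)^2]$. *)

From mathcomp Require Import all_boot all_order all_algebra.
From mathcomp Require Import reals exp.
Set Implicit Arguments. Unset Strict Implicit. Unset Printing Implicit Defensive.
Import Order.TTheory GRing.Theory Num.Theory.
Local Open Scope ring_scope.

Section Model.
Variable R : realType.
Variables (Z S O G W : finType).

(* A trajectory tau_h = (o_1,g_1,...,o_{h-1},g_{h-1},o_h) is encoded as the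
   pair (list of the h-1 pairs (o_k,g_k), current observation o_h). *)
Definition Traj := (seq (O * G) * O)%type.
(* A (history dependent, per-step) policy: pi_h(g | tau_h); the step h is
   determined by the length of tau_h. *)
Definition policy := Traj -> G -> R.

Definition isdist (T : finType) (f : T -> R) :=
  (forall x, 0 <= f x) /\ \sum_(x : T) f x = 1.

Variable H : nat.
Variable rho : S -> R.
Variable Obs : S -> O -> R.
Variable Ptr : Z -> nat -> S -> G -> S -> R.   (* P_{z,h}(s' | s, g), h 0-based *)

(* forward recursion: fwd ... pre alpha rest o s is the joint probability of
   observing prefix pre ++ rest followed by o, and being in state s. *)
Fixpoint fwd (z : Z) (pi : policy) (pre : seq (O * G)) (alpha : S -> R)
    (rest : seq (O * G)) (o : O) : S -> R :=
  match rest with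
  | [::] => fun s => alpha s * Obs s o
  | (o1, g1) :: r =>
      fwd z pi (rcons pre (o1, g1))
        (fun s' => \sum_(s : S) alpha s * Obs s o1 * pi (pre, o1) g1
                                * Ptr z (size pre) s g1 s') r o
  end.

Definition law (z : Z) (pi : policy) (tau : Traj) : R :=
  \sum_(s : S) fwd z pi [::] rho tau.1 tau.2 s.

(* squared Hellinger distance between two laws on trajectories tau_{n+1}
   (n action-observation pairs followed by one observation) *)
Definition hell2 (n : nat) (P Q : Traj -> R) : R :=
  2^-1 * \sum_(p : n.-tuple (O * G)) \sum_(o : O)
           (Num.sqrt (P (tval p, o)) - Num.sqrt (Q (tval p, o))) ^+ 2.

Variable PZ : Z -> R.
Variable PW : W -> R.
Variable pib : W -> policy.
Variable pistar : Z -> W -> policy.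

(* P_D(z', pt) for the prompt pt = H_t u {omega, tau}, H_t = hist: the
   marginal of the pretraining distribution (the labels g^* and the
   unobserved parts of the dataset summed out). *)
Definition PD_joint (z' : Z) (hist : seq (W * Traj)) (om : W) (tau : Traj) : R :=
  PZ z' * (\prod_(e <- hist) (PW e.1 * law z' (pib e.1) e.2))
        * (PW om * law z' (pib om) tau).

Definition post (z' : Z) hist om tau : R :=
  PD_joint z' hist om tau / \sum_(z'' : Z) PD_joint z'' hist om tau.

(* perfect setting: LLM(g | pt) = P_D(g^* = g | pt) *)
Definition LLM hist om (tau : Traj) (g : G) : R :=
  (\sum_(z' : Z) PD_joint z' hist om tau * pistar z' om tau g)
    / \sum_(z' : Z) PD_joint z' hist om tau.

Variable piexp : policy.
Variable eps : R.

(* a record of a past episode: (omega^i, explore-coin, tau^i_H) *)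
Definition strip (hist : seq (W * bool * Traj)) : seq (W * Traj) :=
  map (fun e => (e.1.1, e.2)) hist.

Definition plan_pol (hist : seq (W * bool * Traj)) (om : W) (b : bool) : policy :=
  if b then piexp else fun tau g => LLM (strip hist) om tau g.

Definition coin (b : bool) : R := if b then eps else 1 - eps.

Fixpoint hsum (z z' : Z) (pre rest : seq (W * bool * Traj)) : R :=
  match rest with
  | [::] => 0
  | e :: r => hell2 H.-1 (law z (plan_pol pre e.1.1 e.1.2))
                         (law z' (plan_pol pre e.1.1 e.1.2))
              + hsum z z' (rcons pre e) r
  end.

(* left-hand side of the bound at (h,t): hist = episodes 1..t-1,
   (om, b, tau) = task, coin and tau^t_h of episode t *)
Definition lhs (z : Z) (h : nat) (hist : seq (W * bool * Traj)) (om : W) (b : bool)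
    (tau : Traj) : R :=
  \sum_(z' : Z)
    (hsum z z' [::] hist
     + hell2 h.-1 (law z (plan_pol hist om b)) (law z' (plan_pol hist om b)))
    * post z' (strip hist) om tau.

(* probability, when the Planner interacts with environment z, that after
   n further complete episodes and h steps of the next one the bound fails *)
Fixpoint fail_prob (z : Z) (h : nat) (bound : R) (n : nat)
    (hist : seq (W * bool * Traj)) : R :=
  match n with
  | 0 =>
    \sum_(om : W) \sum_(b : bool) \sum_(p : h.-1.-tuple (O * G)) \sum_(o : O)
      PW om * coin b * law z (plan_pol hist om b) (tval p, o)
      * (if bound < lhs z h hist om b (tval p, o) then 1 else 0)
  | n'.+1 =>
    \sum_(om : W) \sum_(b : bool) \sum_(p : H.-1.-tuple (O * G)) \sum_(o : O)
      PW om * coin b * law z (plan_pol hist om b) (tval p, o)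
      * fail_prob z h bound n' (rcons hist (om, b, (tval p, o)))
  end.

End Model.

(* For each latent z', the product over the episodes of sqrt (P_z' / P_z) (tau^i)
   times exp of the accumulated squared Hellinger distances is a nonnegative
   supermartingale with initial value 1 when the data come from z, because
   E_z [sqrt (P_z' / P_z)] <= 1 - D_H^2 <= exp (- D_H^2). By Markov's inequality,
   with probability 1 - delta all |Z| of them stay below |Z| / delta. Likelihood
   ratios do not depend on the policy, so the posterior of z' (computed with the
   behaviour policy) is at most c_Z times the squared ratio; a Gibbs-type
   inequality, the entropy of the posterior being at most ln |Z|, turns the
   bound for each z' into the posterior-averaged bound 2 ln (c_Z |Z| / delta). *)

From mathcomp Require Import all_boot all_order all_algebra.
From mathcomp Require Import reals sequences exp.
From mathcomp Require Import ring lra.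
Set Implicit Arguments. Unset Strict Implicit. Unset Printing Implicit Defensive.
Import Order.TTheory GRing.Theory Num.Theory.
Local Open Scope ring_scope.

Section TupleSums.
Variables (V : nmodType) (T : finType).

Lemma big_tuple0 (F : seq T -> V) : \sum_(p : 0.-tuple T) F p = F [::].
Proof.
rewrite (eq_bigr (fun _ => F [::])) => [|p _]; last by rewrite tuple0.
by rewrite sumr_const card_tuple expn0.
Qed.

Lemma big_tuple_cons n (F : seq T -> V) :
  \sum_(p : n.+1.-tuple T) F p = \sum_(x : T) \sum_(p : n.-tuple T) F (x :: p).
Proof.
rewrite pair_bigA /= (reindex (fun xp : T * n.-tuple T => [tuple of xp.1 :: xp.2])) //=.
exists (fun p : n.+1.-tuple T => (thead p, [tuple of behead p])).
  by move=> [x p] _; congr (_, _); apply: val_inj.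
by move=> p _; rewrite [in RHS](tuple_eta p).
Qed.

End TupleSums.

Lemma ler_sum_term (R : numDomainType) (T : finType) (F : T -> R) i :
  (forall j, 0 <= F j) -> F i <= \sum_j F j.
Proof. by move=> F0; rewrite (bigD1 i) //= lerDl sumr_ge0. Qed.

Lemma mul_sqrt_divr_le (R : rcfType) (f g : R) : 0 <= f -> 0 <= g ->
  f * Num.sqrt (g / f) <= Num.sqrt f * Num.sqrt g.
Proof.
move=> f0 g0; have [->|fn0] := eqVneq f 0; first by rewrite mul0r mulr_ge0 ?sqrtr_ge0.
have sf0 : Num.sqrt f != 0 by rewrite sqrtr_eq0 -ltNge lt_def fn0 f0.
rewrite sqrtrM // sqrtrV // -{1}(sqr_sqrtr f0) expr2.
by rewrite le_eqVlt; apply/orP; left; apply/eqP; field.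
Qed.

Section RealInequalities.
Variable R : realType.

Lemma isdist_coverage_gt0 (T : finType) (p : T -> R) c x :
  isdist p -> (forall u v, p v <= c * p u) -> 0 < p x.
Proof.
case=> p0 p1 cov; rewrite lt_def p0 andbT; apply/eqP => px0.
have : \sum_y p y <= \sum_(y : T) 0 by apply: ler_sum => y _; rewrite -(mulr0 c) -px0.
by rewrite p1 big1 // ler10.
Qed.

Lemma isdist_coverage_ge1 (T : finType) (p : T -> R) c (x : T) :
  isdist p -> (forall u v, p v <= c * p u) -> 1 <= c.
Proof.
move=> pd cov; have px := isdist_coverage_gt0 x pd cov.
by rewrite -(ler_pM2r px) mul1r cov.
Qed.

Lemma mul_expR1B_le1 (s : R) : 0 <= s -> s * expR (1 - s) <= 1.
Proof.
move=> s0; have le_s : s <= expR (s - 1) by have := expR_ge1Dx (s - 1); rewrite addrC subrK.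
have -> : 1 - s = - (s - 1) by rewrite opprB.
apply: le_trans (_ : expR (s - 1) * expR (- (s - 1)) <= 1); last by rewrite expRxMexpNx_1.
exact: ler_pM s0 (expR_ge0 _) le_s (lexx _).
Qed.

(* Writing [B] for the Bhattacharyya sum of [sqrt f * sqrt g], the Hellinger
   exponent is at most [1 - B], and [B * expR (1 - B) <= 1]. *)
Lemma bhattacharyya_expR_hellinger_le1 (I J : finType) (f g : I -> J -> R) :
  (forall i j, 0 <= f i j) -> (forall i j, 0 <= g i j) ->
  \sum_i \sum_j f i j <= 1 -> \sum_i \sum_j g i j <= 1 ->
  (\sum_i \sum_j f i j * Num.sqrt (g i j / f i j)) *
    expR (2^-1 * \sum_i \sum_j (Num.sqrt (f i j) - Num.sqrt (g i j)) ^+ 2) <= 1.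
Proof.
move=> f0 g0 f1 g1.
set B := \sum_i \sum_j Num.sqrt (f i j) * Num.sqrt (g i j).
have B0 : 0 <= B by do 2 (apply: sumr_ge0 => ? _); rewrite mulr_ge0 ?sqrtr_ge0.
have -> : \sum_i \sum_j (Num.sqrt (f i j) - Num.sqrt (g i j)) ^+ 2 =
          \sum_i \sum_j f i j + \sum_i \sum_j g i j - 2 * B.
  rewrite /B mulr_sumr -sumrN -!big_split /=; apply: eq_bigr => i _.
  rewrite mulr_sumr -sumrN -!big_split /=; apply: eq_bigr => j _.
  rewrite sqrrB !sqr_sqrtr //; ring.
apply: le_trans (mul_expR1B_le1 B0); apply: ler_pM.
- by do 2 (apply: sumr_ge0 => ? _); rewrite mulr_ge0 ?sqrtr_ge0.
- exact: expR_ge0.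
- by do 2 (apply: ler_sum => ? _); apply: mul_sqrt_divr_le.
- by rewrite ler_expR; lra.
Qed.

Lemma neg_mul_ln_le (p N : R) : 0 <= p -> 0 < N ->
  - (p * ln p) <= p * ln N + (N^-1 - p).
Proof.
move=> p0 N0; have [->|pn0] := eqVneq p 0.
  by rewrite !mul0r oppr0 add0r addr0 invr_ge0 ltW.
have pp : 0 < p by rewrite lt_def pn0 p0.
have pN : 0 < p * N by rewrite mulr_gt0.
have pN1 : 0 < (p * N)^-1 by rewrite invr_gt0.
have : ln ((p * N)^-1) <= (p * N)^-1 - 1.
  by have := @le_ln1Dx R ((p * N)^-1 - 1); rewrite [1 + _]addrC subrK; apply; lra.
rewrite lnV ?posrE // lnM ?posrE // => le_ln.
have -> : N^-1 = p * (p * N)^-1 by rewrite invfM mulrA divff ?mul1r.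
nra.
Qed.

Lemma entropy_le_ln_card (T : finType) (p : T -> R) :
  (forall x, 0 <= p x) -> \sum_x p x = 1 -> - \sum_x p x * ln (p x) <= ln #|T|%:R.
Proof.
move=> p0 p1; have N0 : 0 < #|T|%:R :> R.
  rewrite ltr0n lt0n; apply: contra_eqN p1 => /eqP/card0_eq T0.
  by rewrite big_pred0 // eq_sym oner_eq0.
rewrite -sumrN; apply: le_trans (ler_sum _ (fun x _ => neg_mul_ln_le (p0 x) N0)) _.
rewrite big_split /= -mulr_suml p1 mul1r sumrB p1 sumr_const -(mulr_natr (_^-1)) mulVf ?gt_eqF //.
by rewrite subrr addr0.
Qed.

Lemma mul_le_of_expR_bound (p D r c M : R) :
  0 <= p -> 0 <= r -> p <= c * r ^+ 2 -> r * expR D <= M -> 0 < c -> 0 < M ->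
  D * p <= p * (ln M + 2^-1 * ln c) - 2^-1 * (p * ln p).
Proof.
move=> p0 r0 pr rD c0 M0; have [->|pn0] := eqVneq p 0.
  by rewrite !(mulr0, mul0r) subrr.
have pp : 0 < p by rewrite lt_def pn0 p0.
have rp : 0 < r.
  by rewrite lt_def r0 andbT; apply: contraTneq pr => ->; rewrite expr2 !mulr0 -ltNge.
have le_D : D <= ln M - ln r.
  rewrite -ln_div ?posrE // -[D]expRK ler_ln ?posrE ?expR_gt0 ?divr_gt0 //.
  by rewrite ler_pdivlMr // mulrC.
have le_lnp : ln p <= ln c + ln r *+ 2.
  by rewrite -lnXn // -lnM ?posrE ?exprn_gt0 // ler_ln ?posrE ?mulr_gt0 ?exprn_gt0.
rewrite mulr2n in le_lnp; nra.
Qed.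

Lemma sum_mul_le_of_expR_bound (T : finType) (p D r : T -> R) (c M : R) :
  (forall x, 0 <= p x) -> \sum_x p x = 1 -> (forall x, 0 <= r x) ->
  (forall x, p x <= c * r x ^+ 2) -> (forall x, r x * expR (D x) <= M) ->
  0 < c -> 0 < M ->
  \sum_x D x * p x <= ln M + 2^-1 * ln c + 2^-1 * ln #|T|%:R.
Proof.
move=> p0 p1 r0 pr rD c0 M0.
apply: le_trans (ler_sum _ (fun x _ => mul_le_of_expR_bound (p0 x) (r0 x) (pr x) (rD x) c0 M0)) _.
rewrite sumrB -mulr_suml p1 mul1r -mulr_sumr.
have := entropy_le_ln_card p0 p1; lra.
Qed.
End RealInequalities.

Section ForwardRecursion.
Variables (R : realType) (Z S O G : finType).
Variables (Obs : S -> O -> R) (Ptr : Z -> nat -> S -> G -> S -> R).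
Hypothesis Obs_d : forall s, isdist (Obs s).
Hypothesis Ptr_d : forall z k s g, isdist (Ptr z k s g).

Definition subpolicy (pi : policy R O G) :=
  (forall tau g, 0 <= pi tau g) /\ (forall tau, \sum_g pi tau g <= 1).

Definition fwd_step z (pi : policy R O G) pre (alpha : S -> R) o g : S -> R :=
  fun s' => \sum_(s : S) alpha s * Obs s o * pi (pre, o) g * Ptr z (size pre) s g s'.

Lemma fwd_step_ge0 z pi pre alpha o g s' :
  (forall tau g, 0 <= pi tau g) -> (forall s, 0 <= alpha s) ->
  0 <= fwd_step z pi pre alpha o g s'.
Proof.
move=> pi0 alpha0; apply: sumr_ge0 => s _.
by rewrite !mulr_ge0 // ?(Obs_d _).1 ?(Ptr_d _ _ _ _).1.
Qed.

Lemma fwd_ge0 z pi pre alpha rest o s :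
  (forall tau g, 0 <= pi tau g) -> (forall s, 0 <= alpha s) ->
  0 <= fwd Obs Ptr z pi pre alpha rest o s.
Proof.
move=> pi0; elim: rest pre alpha => [|[o1 g1] r IH] pre alpha alpha0 /=.
  by rewrite mulr_ge0 // (Obs_d s).1.
by apply: IH => s'; apply: fwd_step_ge0.
Qed.

Lemma sum_fwd_step_le z pi pre alpha :
  subpolicy pi -> (forall s, 0 <= alpha s) ->
  \sum_(x : O * G) \sum_(s' : S) fwd_step z pi pre alpha x.1 x.2 s' <= \sum_s alpha s.
Proof.
move=> [pi0 pi1] alpha0.
have mass x : \sum_s' fwd_step z pi pre alpha x.1 x.2 s' =
              \sum_s alpha s * Obs s x.1 * pi (pre, x.1) x.2.
  by rewrite exchange_big; apply: eq_bigr => s _; rewrite -mulr_sumr (Ptr_d _ _ _ _).2 mulr1.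
rewrite (eq_bigr _ (fun x _ => mass x)) exchange_big /=; apply: ler_sum => s _.
rewrite -(pair_bigA _ (fun o g => alpha s * Obs s o * pi (pre, o) g)) /=.
rewrite -[leRHS]mulr1 -(Obs_d s).2 mulr_sumr; apply: ler_sum => o _.
by rewrite -mulr_sumr ler_piMr ?mulr_ge0 ?(Obs_d s).1.
Qed.

Lemma sum_fwd_le z pi n pre alpha :
  subpolicy pi -> (forall s, 0 <= alpha s) ->
  \sum_(p : n.-tuple (O * G)) \sum_(o : O) \sum_(s : S)
     fwd Obs Ptr z pi pre alpha p o s <= \sum_s alpha s.
Proof.
move=> pi_sub; elim: n pre alpha => [|n IH] pre alpha alpha0.
  rewrite (big_tuple0 (fun p => \sum_o \sum_s fwd Obs Ptr z pi pre alpha p o s)).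
  rewrite exchange_big /=; apply: ler_sum => s _.
  by rewrite -mulr_sumr (Obs_d s).2 mulr1.
rewrite (big_tuple_cons n (fun p => \sum_o \sum_s fwd Obs Ptr z pi pre alpha p o s)).
apply: le_trans (sum_fwd_step_le z pre pi_sub alpha0); apply: ler_sum => -[o1 g1] _.
by apply: IH => s'; apply: fwd_step_ge0 => //; case: pi_sub.
Qed.

Lemma fwd_scale z pi pre (alpha beta : S -> R) c rest o s :
  (forall s, beta s = c * alpha s) ->
  fwd Obs Ptr z pi pre beta rest o s = c * fwd Obs Ptr z pi pre alpha rest o s.
Proof.
elim: rest pre alpha beta => [|[o1 g1] r IH] pre alpha beta E /=; first by rewrite E mulrA.
apply: IH => s'; rewrite /fwd_step mulr_sumr; apply: eq_bigr => s0 _.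
by rewrite E !mulrA.
Qed.

Definition policy1 : policy R O G := fun _ _ => 1.

Fixpoint policy_weight (pi : policy R O G) pre (rest : seq (O * G)) : R :=
  if rest is (o, g) :: r then pi (pre, o) g * policy_weight pi (rcons pre (o, g)) r
  else 1.

Lemma fwd_policy_weight z pi pre alpha rest o s :
  fwd Obs Ptr z pi pre alpha rest o s =
  policy_weight pi pre rest * fwd Obs Ptr z policy1 pre alpha rest o s.
Proof.
elim: rest pre alpha => [|[o1 g1] r IH] pre alpha /=; first by rewrite mul1r.
rewrite IH (mulrC (pi _ _)) -mulrA; congr (_ * _).
apply: fwd_scale => s'; rewrite /fwd_step mulr_sumr; apply: eq_bigr => s0 _.
rewrite /policy1 mulr1; ring.
Qed.

Section Law.
Variable rho : S -> R.
Hypothesis rho_d : isdist rho.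

Lemma law_ge0 z pi tau :
  (forall tau g, 0 <= pi tau g) -> 0 <= law rho Obs Ptr z pi tau.
Proof. by move=> pi0; apply: sumr_ge0 => s _; apply: fwd_ge0 => // s'; case: rho_d. Qed.

Lemma sum_law_le1 z pi n :
  subpolicy pi ->
  \sum_(p : n.-tuple (O * G)) \sum_(o : O) law rho Obs Ptr z pi (tval p, o) <= 1.
Proof. by case: rho_d => rho0 <- pi_sub; apply: sum_fwd_le. Qed.

Lemma law_policy_weight z pi tau :
  law rho Obs Ptr z pi tau = policy_weight pi [::] tau.1 * law rho Obs Ptr z policy1 tau.
Proof. by rewrite /law mulr_sumr; apply: eq_bigr => s _; rewrite fwd_policy_weight. Qed.

(* The policy contributes the same factor to the law under every latent, so
   likelihood ratios between latents do not depend on the policy. *)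
Lemma law_cross_mul z z' pi pi' tau :
  law rho Obs Ptr z' pi tau * law rho Obs Ptr z pi' tau =
  law rho Obs Ptr z' pi' tau * law rho Obs Ptr z pi tau.
Proof. by rewrite !(law_policy_weight _ pi) !(law_policy_weight _ pi'); ring. Qed.

End Law.
End ForwardRecursion.

Section Planner.
Variables (R : realType) (Z S O G W : finType) (H : nat).
Variables (rho : S -> R) (Obs : S -> O -> R) (Ptr : Z -> nat -> S -> G -> S -> R).
Variables (PZ : Z -> R) (PW : W -> R).
Variables (pib : W -> policy R O G) (pistar : Z -> W -> policy R O G).
Variables (piexp : policy R O G) (eps : R) (z : Z) (h : nat).
Hypothesis rho_d : isdist rho.
Hypothesis Obs_d : forall s, isdist (Obs s).
Hypothesis Ptr_d : forall z0 k s g, isdist (Ptr z0 k s g).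
Hypothesis PZ_d : isdist PZ.
Hypothesis PW_d : isdist PW.
Hypothesis pib_d : forall om tau, isdist (pib om tau).
Hypothesis pistar_d : forall z0 om tau, isdist (pistar z0 om tau).
Hypothesis piexp_d : forall tau, isdist (piexp tau).
Hypothesis eps01 : 0 <= eps <= 1.

Local Notation law := (law rho Obs Ptr).
Local Notation pol := (plan_pol rho Obs Ptr PZ PW pib pistar piexp).
Local Notation PD := (PD_joint rho Obs Ptr PZ PW pib).
Local Notation hist_t := (seq (W * bool * Traj O G)).
Local Notation hs := (hsum H rho Obs Ptr PZ PW pib pistar piexp z).

Lemma law_pib_ge0 z' om tau : 0 <= law z' (pib om) tau.
Proof. by apply: law_ge0 => // tau' g; case: (pib_d om tau'). Qed.

Lemma PD_joint_ge0 z' hist om tau : 0 <= PD z' hist om tau.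
Proof.
rewrite /PD_joint !mulr_ge0 ?PZ_d.1 ?PW_d.1 ?law_pib_ge0 //.
by apply: prodr_ge0 => e _; rewrite mulr_ge0 ?PW_d.1 ?law_pib_ge0.
Qed.

(* On a prompt of pretraining probability 0 the LLM's output is 0/0 = 0, so the
   Planner's policies are only subpolicies. *)
Lemma plan_pol_subpolicy hist om b : subpolicy (pol hist om b).
Proof.
case: b => /=; first by split=> [tau g|tau]; rewrite ?(piexp_d tau).1 ?(piexp_d tau).2.
split=> [tau g|tau]; rewrite /= /LLM.
  have pistar0 z' : 0 <= pistar z' om tau g by case: (pistar_d z' om tau).
  apply: divr_ge0; apply: sumr_ge0 => z' _; last exact: PD_joint_ge0.
  exact: mulr_ge0 (PD_joint_ge0 _ _ _ _) (pistar0 z').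
rewrite -mulr_suml exchange_big /=.
under eq_bigr => z' _ do rewrite -mulr_sumr (pistar_d _ _ _).2 mulr1.
set D := \sum_z' _.
by have [->|D0] := eqVneq D 0; rewrite ?mul0r ?divff.
Qed.

Lemma law_pol_ge0 z' hist om b tau : 0 <= law z' (pol hist om b) tau.
Proof. by apply: law_ge0 => //; case: (plan_pol_subpolicy hist om b). Qed.

Lemma coin_ge0 b : 0 <= coin eps b.
Proof. by case: b => /=; case/andP: eps01 => e0 e1; lra. Qed.

Definition step_expect m (hist : hist_t) (K : W -> bool -> Traj O G -> R) : R :=
  \sum_(om : W) \sum_(b : bool) \sum_(p : m.-tuple (O * G)) \sum_(o : O)
    PW om * coin eps b * law z (pol hist om b) (tval p, o) * K om b (tval p, o).

Fixpoint expect_after (F : hist_t -> W -> bool -> Traj O G -> R) n hist : R :=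
  if n is n'.+1 then
    step_expect H.-1 hist (fun om b tau => expect_after F n' (rcons hist (om, b, tau)))
  else step_expect h.-1 hist (F hist).

Lemma fail_prob_expect_after bound n hist :
  fail_prob H rho Obs Ptr PZ PW pib pistar piexp eps z h bound n hist =
  expect_after (fun hist om b tau =>
    if bound < lhs H rho Obs Ptr PZ PW pib pistar piexp z h hist om b tau then 1 else 0)
    n hist.
Proof.
elim: n hist => [|n IH] hist //=.
by rewrite /step_expect; do 4 (apply: eq_bigr => ? _); rewrite IH.
Qed.

Lemma step_expect_le m hist K1 K2 :
  (forall om b tau, 0 < law z (pol hist om b) tau -> K1 om b tau <= K2 om b tau) ->
  step_expect m hist K1 <= step_expect m hist K2.
Proof.
move=> K12; apply: ler_sum => om _; apply: ler_sum => b _.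
apply: ler_sum => p _; apply: ler_sum => o _.
have [->|lp] := eqVneq (law z (pol hist om b) (tval p, o)) 0; first by rewrite !(mulr0, mul0r).
rewrite ler_wpM2l ?mulr_ge0 ?PW_d.1 ?coin_ge0 ?law_pol_ge0 // K12 //.
by rewrite lt_def lp law_pol_ge0.
Qed.

Lemma step_expect_sum m hist (a : Z -> R) (K : Z -> W -> bool -> Traj O G -> R) :
  step_expect m hist (fun om b tau => \sum_i a i * K i om b tau) =
  \sum_i a i * step_expect m hist (K i).
Proof.
rewrite /step_expect; do 4 (under [RHS]eq_bigr => i _ do rewrite mulr_sumr;
  rewrite [RHS]exchange_big; apply: eq_bigr => ? _).
by rewrite mulr_sumr; apply: eq_bigr => i _; rewrite mulrCA.
Qed.

Definition lr_sqrt z' hist om b tau : R :=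
  Num.sqrt (law z' (pol hist om b) tau / law z (pol hist om b) tau).

Definition step_factor m z' hist om b tau : R :=
  lr_sqrt z' hist om b tau * expR (hell2 m (law z (pol hist om b)) (law z' (pol hist om b))).

Lemma step_factor_ge0 m z' hist om b tau : 0 <= step_factor m z' hist om b tau.
Proof. by rewrite mulr_ge0 ?sqrtr_ge0 ?expR_ge0. Qed.

Lemma step_expect_factor_le1 m hist z' : step_expect m hist (step_factor m z' hist) <= 1.
Proof.
apply: le_trans (_ : \sum_om \sum_b PW om * coin eps b <= 1); last first.
  under eq_bigr => om _ do rewrite -mulr_sumr big_bool /= [eps + _]addrC subrK mulr1.
  by rewrite PW_d.2.
apply: ler_sum => om _; apply: ler_sum => b _.
set P := law z (pol hist om b); set Q := law z' (pol hist om b).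
rewrite (eq_bigr (fun p => PW om * coin eps b *
    \sum_o P (tval p, o) * step_factor m z' hist om b (tval p, o))); last first.
  by move=> p _; rewrite mulr_sumr; apply: eq_bigr => o _; rewrite mulrA.
rewrite -mulr_sumr ler_piMr ?mulr_ge0 ?PW_d.1 ?coin_ge0 //.
under eq_bigr => p _ do under eq_bigr => o _ do rewrite /step_factor /lr_sqrt -/P -/Q mulrA.
under eq_bigr => p _ do rewrite -mulr_suml.
rewrite -mulr_suml.
apply: (bhattacharyya_expR_hellinger_le1 (f := fun p o => P (tval p, o))
                                         (g := fun p o => Q (tval p, o))).
- by move=> p o; apply: law_pol_ge0.
- by move=> p o; apply: law_pol_ge0.
- exact/sum_law_le1/plan_pol_subpolicy.
- exact/sum_law_le1/plan_pol_subpolicy.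
Qed.

Lemma step_expect_factor_sum_le m hist (a : Z -> R) : (forall i, 0 <= a i) ->
  step_expect m hist (fun om b tau => \sum_i a i * step_factor m i hist om b tau)
  <= \sum_i a i.
Proof.
move=> a0; rewrite (step_expect_sum m hist a (fun i => step_factor m i hist)).
apply: ler_sum => i _.
exact: ler_piMr (a0 i) (step_expect_factor_le1 m hist i).
Qed.

Fixpoint lr_sqrt_hist z' (pre rest : hist_t) : R :=
  if rest is e :: r then lr_sqrt z' pre e.1.1 e.1.2 e.2 * lr_sqrt_hist z' (rcons pre e) r
  else 1.

(* On these histories no [lr_sqrt] along the way is the junk value sqrt (_ / 0). *)
Fixpoint supported (pre rest : hist_t) : Prop :=
  if rest is e :: r then 0 < law z (pol pre e.1.1 e.1.2) e.2 /\ supported (rcons pre e) r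
  else True.

Lemma lr_sqrt_hist_ge0 z' pre rest : 0 <= lr_sqrt_hist z' pre rest.
Proof. by elim: rest pre => [|e r IH] pre //=; rewrite mulr_ge0 ?sqrtr_ge0. Qed.

Lemma lr_sqrt_hist_rcons z' pre rest e :
  lr_sqrt_hist z' pre (rcons rest e) =
  lr_sqrt_hist z' pre rest * lr_sqrt z' (pre ++ rest) e.1.1 e.1.2 e.2.
Proof.
elim: rest pre => [|x r IH] pre /=; first by rewrite cats0 mul1r mulr1.
by rewrite IH mulrA cat_rcons.
Qed.

Lemma hsum_rcons z' pre rest e :
  hs z' pre (rcons rest e) = hs z' pre rest +
    hell2 H.-1 (law z (pol (pre ++ rest) e.1.1 e.1.2))
               (law z' (pol (pre ++ rest) e.1.1 e.1.2)).
Proof.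
elim: rest pre => [|x r IH] pre /=; first by rewrite cats0 add0r addr0.
by rewrite IH addrA cat_rcons.
Qed.

Lemma supported_rcons pre rest e :
  supported pre rest -> 0 < law z (pol (pre ++ rest) e.1.1 e.1.2) e.2 ->
  supported pre (rcons rest e).
Proof.
elim: rest pre => [|x r IH] pre /=; first by rewrite cats0.
by move=> [lx sr] le; split=> //; apply: IH; rewrite ?cat_rcons.
Qed.

(* [wealth z'] is a nonnegative supermartingale for the Planner in environment
   [z]: each episode multiplies it by a [step_factor], of conditional
   expectation at most 1. *)
Definition wealth z' (hist : hist_t) : R :=
  lr_sqrt_hist z' [::] hist * expR (hs z' [::] hist).

Lemma wealth_ge0 z' hist : 0 <= wealth z' hist.
Proof. by rewrite mulr_ge0 ?lr_sqrt_hist_ge0 ?expR_ge0. Qed.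

Lemma wealth_nil z' : wealth z' [::] = 1.
Proof. by rewrite /wealth /= expR0 mulr1. Qed.

Lemma wealth_rcons z' hist om b tau :
  wealth z' (rcons hist (om, b, tau)) = wealth z' hist * step_factor H.-1 z' hist om b tau.
Proof. by rewrite /wealth lr_sqrt_hist_rcons hsum_rcons expRD /step_factor; ring. Qed.

Definition final_wealth c hist om b tau : R :=
  \sum_z' c * wealth z' hist * step_factor h.-1 z' hist om b tau.

Lemma expect_after_le F1 F2 n hist : supported [::] hist ->
  (forall hist om b tau, supported [::] hist -> 0 < law z (pol hist om b) tau ->
     F1 hist om b tau <= F2 hist om b tau) ->
  expect_after F1 n hist <= expect_after F2 n hist.
Proof.
move=> sh F12; elim: n hist sh => [|n IH] hist sh /=; apply: step_expect_le => om b tau lp.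
  exact: F12.
by apply/IH/supported_rcons.
Qed.

Lemma expect_final_wealth_le c n hist : 0 <= c ->
  expect_after (final_wealth c) n hist <= \sum_z' c * wealth z' hist.
Proof.
move=> c0; have cw0 hist' z' : 0 <= c * wealth z' hist' by rewrite mulr_ge0 ?wealth_ge0.
elim: n hist => [|n IH] hist /=; first exact: step_expect_factor_sum_le.
apply: le_trans (step_expect_factor_sum_le H.-1 hist (cw0 hist)).
apply: step_expect_le => om b tau _; apply: le_trans (IH _) _.
by under eq_bigr do rewrite wealth_rcons mulrA.
Qed.

Lemma law_pib_lr z' om pi tau : 0 < law z pi tau ->
  law z' (pib om) tau = law z (pib om) tau * (law z' pi tau / law z pi tau).
Proof.
move=> lp; rewrite mulrA (mulrC (law z _ _)) -law_cross_mul mulfK // gt_eqF //.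
Qed.

Lemma sqr_lr_sqrt z' hist om b tau :
  lr_sqrt z' hist om b tau ^+ 2 = law z' (pol hist om b) tau / law z (pol hist om b) tau.
Proof. by rewrite sqr_sqrtr ?divr_ge0 ?law_pol_ge0. Qed.

Lemma prod_law_pib_lr z' pre rest : supported pre rest ->
  \prod_(e <- strip rest) (PW e.1 * law z' (pib e.1) e.2) =
  \prod_(e <- strip rest) (PW e.1 * law z (pib e.1) e.2) * lr_sqrt_hist z' pre rest ^+ 2.
Proof.
elim: rest pre => [|e r IH] pre /=; first by rewrite !big_nil expr1n mulr1.
move=> [lp sr]; rewrite !big_cons (IH _ sr) (law_pib_lr z' e.1.1 lp) exprMn sqr_lr_sqrt.
by rewrite mulrA; ring.
Qed.

Definition lr_sqrt_prompt z' hist om b tau : R :=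
  lr_sqrt_hist z' [::] hist * lr_sqrt z' hist om b tau.

Lemma PD_joint_lr z' hist om b tau :
  supported [::] hist -> 0 < law z (pol hist om b) tau ->
  PZ z * PD z' (strip hist) om tau =
  PZ z' * PD z (strip hist) om tau * lr_sqrt_prompt z' hist om b tau ^+ 2.
Proof.
move=> sh lp; rewrite /PD_joint /lr_sqrt_prompt (prod_law_pib_lr z' sh).
by rewrite (law_pib_lr z' om lp) exprMn sqr_lr_sqrt; ring.
Qed.

Variable cZ : R.
Hypothesis coverage : forall z1 z2 : Z, PZ z2 <= cZ * PZ z1.

Lemma post_le_lr z' hist om b tau :
  supported [::] hist -> 0 < law z (pol hist om b) tau ->
  post rho Obs Ptr PZ PW pib z' (strip hist) om tau
    <= cZ * lr_sqrt_prompt z' hist om b tau ^+ 2.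
Proof.
move=> sh lp; have PZz := isdist_coverage_gt0 z PZ_d coverage.
have c0 : 0 <= cZ by have := isdist_coverage_ge1 z PZ_d coverage; lra.
set r2 := lr_sqrt_prompt _ _ _ _ _ ^+ 2.
have r20 : 0 <= r2 by rewrite exprn_ge0 ?mulr_ge0 ?lr_sqrt_hist_ge0 ?sqrtr_ge0.
have le_PD : PD z' (strip hist) om tau <= cZ * r2 * PD z (strip hist) om tau.
  rewrite -(ler_pM2l PZz) (PD_joint_lr z' sh lp) -/r2.
  have := mulr_ge0 (PD_joint_ge0 z (strip hist) om tau) r20.
  have := coverage z z'; nra.
rewrite /post; set D := \sum_z'' _.
have [->|Dn0] := eqVneq D 0; first by rewrite invr0 mulr0 mulr_ge0.
have Dp : 0 < D by rewrite lt_def Dn0 sumr_ge0 // => z'' _; apply: PD_joint_ge0.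
rewrite ler_pdivrMr //; apply: le_trans le_PD _.
rewrite ler_wpM2l ?(mulr_ge0 c0 r20) //.
by apply: (ler_sum_term (F := fun z'' => PD z'' (strip hist) om tau)) => z''; apply: PD_joint_ge0.
Qed.

Lemma wealth_step_factor m z' hist om b tau :
  wealth z' hist * step_factor m z' hist om b tau =
  lr_sqrt_prompt z' hist om b tau *
  expR (hs z' [::] hist + hell2 m (law z (pol hist om b)) (law z' (pol hist om b))).
Proof. by rewrite /wealth /step_factor /lr_sqrt_prompt expRD; ring. Qed.

Lemma lhs_le_of_wealth_bound M hist om b tau :
  1 <= M -> supported [::] hist -> 0 < law z (pol hist om b) tau ->
  (forall z', wealth z' hist * step_factor h.-1 z' hist om b tau <= M) ->
  lhs H rho Obs Ptr PZ PW pib pistar piexp z h hist om b tau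
    <= ln M + 2^-1 * ln cZ + 2^-1 * ln #|Z|%:R.
Proof.
move=> M1 sh lp wM; have c1 := isdist_coverage_ge1 z PZ_d coverage.
have N1 : 1 <= #|Z|%:R :> R by rewrite ler1n; apply/card_gt0P; exists z.
have := ln_ge0 M1; have := ln_ge0 c1; have := ln_ge0 N1 => lnN lnc lnM.
set D := \sum_z'' PD z'' (strip hist) om tau.
have [D0|Dn0] := eqVneq D 0.
  rewrite /lhs big1 => [|z' _]; last by rewrite /post -/D D0 invr0 !mulr0.
  lra.
apply: (sum_mul_le_of_expR_bound (r := fun z' => lr_sqrt_prompt z' hist om b tau)).
- by move=> z'; rewrite divr_ge0 ?PD_joint_ge0 ?sumr_ge0 // => z'' _; apply: PD_joint_ge0.
- by rewrite /post -mulr_suml -/D divff.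
- by move=> z'; rewrite mulr_ge0 ?lr_sqrt_hist_ge0 ?sqrtr_ge0.
- by move=> z'; apply: post_le_lr.
- by move=> z'; rewrite -wealth_step_factor.
- lra.
- lra.
Qed.

Lemma fail_indicator_le delta hist om b tau :
  0 < delta < 1 -> supported [::] hist -> 0 < law z (pol hist om b) tau ->
  (if 2 * ln (cZ * #|Z|%:R / delta) <
      lhs H rho Obs Ptr PZ PW pib pistar piexp z h hist om b tau then 1 else 0)
  <= final_wealth (delta / #|Z|%:R) hist om b tau.
Proof.
move=> /andP[d0 d1] sh lp; have c1 := isdist_coverage_ge1 z PZ_d coverage.
set N := #|Z|%:R; have N1 : 1 <= N by rewrite ler1n; apply/card_gt0P; exists z.
have N0 : 0 < N by lra.
have c0 : 0 < cZ by lra.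
have term0 z' : 0 <= delta / N * wealth z' hist * step_factor h.-1 z' hist om b tau.
  by rewrite mulr_ge0 ?step_factor_ge0 // mulr_ge0 ?wealth_ge0 // divr_ge0 ?ltW.
case: ifP => [exceed|_]; last by apply: sumr_ge0 => z' _.
rewrite leNgt; apply: contraTN exceed => small; rewrite -leNgt.
have le_bound : ln (N / delta) + 2^-1 * ln cZ + 2^-1 * ln N <= 2 * ln (cZ * N / delta).
  rewrite !ln_div ?posrE ?mulr_gt0 // lnM ?posrE //.
  have := ln_ge0 c1; have := ln_ge0 N1; have : ln delta < 0 by rewrite ln_lt0 ?d0.
  lra.
apply: le_trans le_bound; apply: lhs_le_of_wealth_bound => //.
  by rewrite ler_pdivlMr // mul1r; lra.
move=> z'; have := le_lt_trans (ler_sum_term z' term0) small.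
rewrite -mulrA mulrAC ltr_pdivrMr // mul1r => lt_N.
by rewrite ler_pdivlMr // mulrC ltW.
Qed.

Lemma fail_prob_le delta n : 0 < delta < 1 ->
  fail_prob H rho Obs Ptr PZ PW pib pistar piexp eps z h
    (2 * ln (cZ * #|Z|%:R / delta)) n [::] <= delta.
Proof.
move=> d01; have N0 : 0 < #|Z|%:R :> R by rewrite ltr0n; apply/card_gt0P; exists z.
rewrite fail_prob_expect_after.
apply: le_trans (expect_after_le (F2 := final_wealth (delta / #|Z|%:R)) n _ _) _ => //.
  by move=> hist om b tau; apply: fail_indicator_le.
apply: le_trans (expect_final_wealth_le _ _ _) _.
  by rewrite divr_ge0 ?ltW //; case/andP: d01.
under eq_bigr do rewrite wealth_nil mulr1.
by rewrite sumr_const -(mulr_natr (delta / _)) mulfVK ?gt_eqF.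
Qed.

End Planner.

Theorem lemma1 (R : realType) (Z S O G W : finType) (H T : nat)
  (rho : S -> R) (Obs : S -> O -> R) (Ptr : Z -> nat -> S -> G -> S -> R)
  (PZ : Z -> R) (PW : W -> R) (pib : W -> policy R O G)
  (pistar : Z -> W -> policy R O G) (piexp : policy R O G)
  (eps cZ delta : R) (z : Z) (h t : nat) :
  isdist rho ->
  (forall s, isdist (Obs s)) ->
  (forall z0 k s g, isdist (Ptr z0 k s g)) ->
  isdist PZ -> isdist PW ->
  (forall om tau, isdist (pib om tau)) ->
  (forall z0 om tau, isdist (pistar z0 om tau)) ->
  (forall tau, isdist (piexp tau)) ->
  0 <= eps <= 1 ->
  (* prior coverage: sup_{z,z'} PZ z' / PZ z <= cZ *)
  (forall z1 z2 : Z, PZ z2 <= cZ * PZ z1) ->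
  0 < delta < 1 ->
  (1 <= h <= H)%N -> (1 <= t <= T)%N ->
  fail_prob H rho Obs Ptr PZ PW pib pistar piexp eps z h
    (2 * ln (cZ * #|Z|%:R / delta)) t.-1 [::] <= delta.
Proof.
(* The bound holds for every [h] and every number of completed episodes. *)
by move=> *; apply: fail_prob_le.
Qed.
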